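(* Let $P_1$ and $P_2$ be non-constant rational functions with real coefficients such that $\mathbb{R}(P_1,P_2)=\mathbb{R}(z)$, i.e. $P_1$ and $P_2$ generate the whole field $\mathbb{R}(z)$ of real rational functions. Then $P_1^{-1}(\widehat{\mathbb{R}})\cap P_2^{-1}(\widehat{\mathbb{R}})=\widehat{\mathbb{R}}\cup A$, where $A$ is a finite subset of $\mathbb{CP}^1$.
   Context: $\widehat{\mathbb{R}}=\mathbb{R}\cup\{\infty\}\subset\mathbb{CP}^1$ denotes the projectively extended real line; $P_1,P_2$ are viewed as maps $\mathbb{CP}^1\to\mathbb{CP}^1$ and preimages are taken in $\mathbb{CP}^1$. *)

From HB Require Import structures.
From mathcomp Require Import all_boot all_order all_algebra.
From mathcomp Require Import reals.
From mathcomp Require Import complex.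
From mathcomp Require Import fraction.
Set Implicit Arguments. Unset Strict Implicit. Unset Printing Implicit Defensive.
Import Order.TTheory GRing.Theory Num.Theory.
Local Open Scope ring_scope.

(* The projective line CP^1 = C ∪ {∞}: [None] is ∞, [Some z] is z. *)
Definition CP1 (R : realType) := option R[i].

Definition in_Rhat (R : realType) (w : CP1 R) : bool :=
  match w with None => true | Some z => Im z == 0 end.

Definition ceval (R : realType) (p : {poly R}) (z : R[i]) : R[i] :=
  (map_poly (real_complex R) p).[z].

(* The rational function p/q (p, q coprime, q <> 0) as a map CP^1 -> CP^1. *)
Definition ratmap (R : realType) (p q : {poly R}) (w : CP1 R) : CP1 R :=
  match w with
  | Some z => if ceval q z == 0 then None else Some (ceval p z / ceval q z)
  | None => if (size q < size p)%N then None
            else if size p == size q then Some ((lead_coef p / lead_coef q)%:C)%C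
            else Some 0
  end.

Definition RZ (R : realType) := {fraction {poly R}}.
Definition frac_of (R : realType) (p q : {poly R}) : RZ R := FracField.tofrac p / FracField.tofrac q.

Definition eval2 (R : realType) (Q : {poly {poly R}}) (x y : RZ R) : RZ R :=
  (map_poly (fun c : {poly R} => (map_poly (fun a : R => FracField.tofrac (a%:P)) c).[x]) Q).[y].

(* R(f1, f2) = R(z): the subfield of R(z) generated over R by f1, f2, i.e.
   { A(f1,f2)/B(f1,f2) : A, B in R[X,Y], B(f1,f2) <> 0 }, is all of R(z).
   Since it is always contained in R(z), this holds iff it contains z. *)
Definition generates_Rz (R : realType) (f1 f2 : RZ R) : Prop :=
  forall f : RZ R, exists A B : {poly {poly R}},
    eval2 B f1 f2 != 0 /\ f = eval2 A f1 f2 / eval2 B f1 f2.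

From HB Require Import structures.
From mathcomp Require Import all_boot all_order all_algebra.
From mathcomp Require Import reals complex fraction.
From mathcomp Require Import ring.
Set Implicit Arguments. Unset Strict Implicit.
Unset Printing Implicit Defensive.
Import Order.TTheory GRing.Theory Num.Theory.
Local Open Scope ring_scope.

(* Since R(f1, f2) contains z, we have z = A(f1, f2) / B(f1, f2) for real
   bivariate polynomials A, B.  Clearing the denominators q1, q2 turns this
   into a polynomial identity z * Bh = Ah with real Ah, Bh, where Bh is
   q1^n1 q2^n2 B(f1, f2).  Evaluating it at a complex point z where f1, f2
   take real values and q1 q2 Bh does not vanish exhibits z as a quotient of
   real numbers.  So every non-real point of the preimage is among the finitely
   many roots of q1 q2 Bh, and the point at infinity lies in the preimage as
   f1, f2 are real. *)

Section Homogenization.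
Variables (R : comNzRingType) (F : fieldType) (psi : {rmorphism {poly R} -> F}).

Definition eval2_via (Q : {poly {poly R}}) (x y : F) : F :=
  (map_poly (fun c => (map_poly (psi \o polyC) c).[x]) Q).[y].

Definition inner_size (Q : {poly {poly R}}) : nat :=
  (\max_(j < size Q) size (Q`_j)%R)%N.

Lemma size_coef_le_inner_size (Q : {poly {poly R}}) j :
  (size (Q`_j)%R <= inner_size Q)%N.
Proof.
have [ltjQ | leQj] := ltnP j (size Q).
  exact: (@leq_bigmax _ (fun k : 'I_(size Q) => size Q`_k) (Ordinal ltjQ)).
by rewrite nth_default ?size_poly0.
Qed.

Definition bisize_le (Q : {poly {poly R}}) (n1 n2 : nat) : bool :=
  (inner_size Q <= n1)%N && (size Q <= n2)%N.

Definition homog2 (Q : {poly {poly R}}) n1 n2 (p1 q1 p2 q2 : {poly R}) :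
    {poly R} :=
  \sum_(j < n2) \sum_(i < n1)
     ((Q`_j)`_i)%:P * (p1 ^+ i * q1 ^+ (n1 - i) * p2 ^+ j * q2 ^+ (n2 - j)).

Lemma rmorph_homog2 (Q : {poly {poly R}}) n1 n2 (p1 q1 p2 q2 : {poly R}) :
  psi q1 != 0 -> psi q2 != 0 -> bisize_le Q n1 n2 ->
  psi (homog2 Q n1 n2 p1 q1 p2 q2) =
  psi q1 ^+ n1 * psi q2 ^+ n2 * eval2_via Q (psi p1 / psi q1) (psi p2 / psi q2).
Proof.
move=> q1n0 q2n0 /andP[innerQ sizeQ].
rewrite /eval2_via (@horner_coef_wide _ n2 (map_poly _ Q)); last first.
  exact: leq_trans (size_poly _ _) sizeQ.
rewrite rmorph_sum mulr_sumr; apply: eq_bigr => j _.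
rewrite coef_map_id0 ?map_poly0 ?horner0 //.
rewrite (@horner_coef_wide _ n1 (map_poly _ Q`_j)); last first.
  apply: leq_trans (size_poly _ _) _.
  exact: leq_trans (size_coef_le_inner_size _ _) innerQ.
rewrite rmorph_sum mulr_suml mulr_sumr; apply: eq_bigr => i _.
rewrite coef_map_id0 ?rmorph0 // !rmorphM !rmorphXn /= !expr_div_n.
have splitX k n (x : F) : (k <= n)%N -> x ^+ n = x ^+ (n - k) * x ^+ k.
  by move=> lekn; rewrite -exprD subnK.
rewrite (splitX i n1 _ (ltnW (ltn_ord i))) (splitX j n2 _ (ltnW (ltn_ord j))).
by field; rewrite !expf_neq0.
Qed.

Lemma homog2_ratio (A B : {poly {poly R}}) n1 n2 (p1 q1 p2 q2 : {poly R}) :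
  psi q1 != 0 -> psi q2 != 0 ->
  bisize_le A n1 n2 -> bisize_le B n1 n2 ->
  psi (homog2 A n1 n2 p1 q1 p2 q2) / psi (homog2 B n1 n2 p1 q1 p2 q2) =
  eval2_via A (psi p1 / psi q1) (psi p2 / psi q2) /
  eval2_via B (psi p1 / psi q1) (psi p2 / psi q2).
Proof.
move=> q1n0 q2n0 degA degB.
rewrite !rmorph_homog2 // invfM mulrACA mulfV ?mul1r //.
by apply: mulf_neq0; apply: expf_neq0.
Qed.

Lemma rmorph_homog2_neq0 (Q : {poly {poly R}}) n1 n2 (p1 q1 p2 q2 : {poly R}) :
  psi q1 != 0 -> psi q2 != 0 -> bisize_le Q n1 n2 ->
  eval2_via Q (psi p1 / psi q1) (psi p2 / psi q2) != 0 ->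
  psi (homog2 Q n1 n2 p1 q1 p2 q2) != 0.
Proof.
move=> q1n0 q2n0 degQ eQn0; rewrite rmorph_homog2 //.
by rewrite !mulf_neq0 ?expf_neq0.
Qed.

Lemma eval2_via_rpred (S : subringClosed F) (Q : {poly {poly R}}) (x y : F) :
  (forall a, psi a%:P \in S) -> x \in S -> y \in S -> eval2_via Q x y \in S.
Proof.
move=> Sconst Sx Sy; apply: rpred_horner => //; apply/polyOverP => j.
rewrite coef_map_id0 ?map_poly0 ?horner0 //; apply: rpred_horner => //.
by apply/polyOverP => i; rewrite coef_map_id0 /= ?Sconst ?rmorph0.
Qed.

End Homogenization.

Section ComplexPoints.
Variable R : realType.

Definition ceval_at (z : R[i]) : {rmorphism {poly R} -> R[i]} :=
  horner_eval z \o map_poly (real_complex R).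

Lemma ceval_atE (p : {poly R}) z : ceval_at z p = ceval p z.
Proof. by []. Qed.

Lemma real_complex_real (x : R) : (x%:C)%C \is Num.real.
Proof. by rewrite realE !lecE /= eqxx /= le_total. Qed.

Lemma in_RhatE (u : R[i]) : in_Rhat (Some u) = (u \is Num.real).
Proof. by apply/idP/idP => [/eqP/Creal_ImP | /Creal_ImP/eqP]. Qed.

Lemma ceval_real (p : {poly R}) z : z \is Num.real -> ceval p z \is Num.real.
Proof.
move=> zreal; apply: rpred_horner => //; apply/polyOverP => i.
by rewrite coef_map_id0 ?rmorph0 ?real_complex_real.
Qed.

Lemma ratmapE (p q : {poly R}) z :
  ceval q z != 0 -> ratmap p q (Some z) = Some (ceval p z / ceval q z).
Proof. by rewrite /ratmap => /negbTE ->. Qed.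

Lemma in_Rhat_ratmap_oo (p q : {poly R}) : in_Rhat (ratmap p q None).
Proof.
rewrite /ratmap; case: ifP => // _.
by case: ifP => _; rewrite in_RhatE ?real_complex_real ?real0.
Qed.

Lemma in_Rhat_ratmap_real (p q : {poly R}) z :
  z \is Num.real -> in_Rhat (ratmap p q (Some z)).
Proof.
move=> zreal; have [q0 | qn0] := eqVneq (ceval q z) 0.
  by rewrite /ratmap q0 eqxx.
by rewrite ratmapE // in_RhatE rpredM ?rpredV ?ceval_real.
Qed.

Lemma Rhat_up_to_roots (S : pred (CP1 R)) (P : {poly R[i]}) : P != 0 ->
  (forall w, in_Rhat w -> S w) ->
  (forall z, S (Some z) -> ~~ root P z -> z \is Num.real) ->
  exists A : seq (CP1 R), forall w, S w = in_Rhat w || (w \in A).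
Proof.
move=> Pn0 SRhat Sroot; have [s Ps] := closed_field_poly_normal P.
exists [seq w <- map Some s | S w] => w.
have [/SRhat -> // | notRhat] := boolP (in_Rhat w).
rewrite mem_filter; case: w notRhat => [z|//].
rewrite in_RhatE => zNreal.
apply/idP/andP => [Sz | [] //]; split=> //.
rewrite (mem_map (@Some_inj _)); apply: contraNT zNreal => zNs.
by apply: Sroot Sz _; rewrite Ps rootZ ?lead_coef_eq0 // root_prod_XsubC.
Qed.

End ComplexPoints.

Section Generators.
Variables (R : realType) (p1 q1 p2 q2 : {poly R}).
Hypotheses (q1n0 : q1 != 0) (q2n0 : q2 != 0).

Notation homog Q n1 n2 := (homog2 Q n1 n2 p1 q1 p2 q2).
Notation tofrac := (@FracField.tofrac {poly R}).

Lemma eval2E (Q : {poly {poly R}}) :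
  eval2 Q (frac_of p1 q1) (frac_of p2 q2) =
  eval2_via tofrac Q (tofrac p1 / tofrac q1) (tofrac p2 / tofrac q2).
Proof. by []. Qed.

Lemma homog2_X_relation : generates_Rz (frac_of p1 q1) (frac_of p2 q2) ->
  exists A B n1 n2, [/\ bisize_le A n1 n2, bisize_le B n1 n2,
    homog B n1 n2 != 0 & 'X * homog B n1 n2 = homog A n1 n2].
Proof.
move=> /(_ (tofrac 'X)) [A [B]]; rewrite !eval2E => -[eBn0 XE].
pose n1 := maxn (inner_size A) (inner_size B).
pose n2 := maxn (size A) (size B).
have degA : bisize_le A n1 n2 by rewrite /bisize_le !leq_maxl.
have degB : bisize_le B n1 n2 by rewrite /bisize_le !leq_maxr.
have tq1n0 : tofrac q1 != 0 by rewrite tofrac_eq0.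
have tq2n0 : tofrac q2 != 0 by rewrite tofrac_eq0.
have Bn0 : homog B n1 n2 != 0.
  rewrite -tofrac_eq0.
  exact: (rmorph_homog2_neq0 (psi := tofrac) tq1n0 tq2n0 degB eBn0).
have := homog2_ratio (psi := tofrac) p1 p2 tq1n0 tq2n0 degA degB.
rewrite -XE => ratioE.
exists A, B, n1, n2; split=> //; apply/eqP.
by rewrite -tofrac_eq rmorphM -[X in X * _]ratioE divfK ?eqxx ?tofrac_eq0.
Qed.

Lemma real_of_homog2_relation (A B : {poly {poly R}}) n1 n2 (z : R[i]) :
  bisize_le A n1 n2 -> bisize_le B n1 n2 ->
  'X * homog B n1 n2 = homog A n1 n2 ->
  ceval (q1 * q2 * homog B n1 n2) z != 0 ->
  in_Rhat (ratmap p1 q1 (Some z)) -> in_Rhat (ratmap p2 q2 (Some z)) ->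
  z \is Num.real.
Proof.
move=> degA degB XBA; rewrite -ceval_atE !rmorphM !mulf_eq0 !negb_or.
move=> /andP[/andP[q1zn0 q2zn0] Bzn0]; rewrite !ratmapE // !in_RhatE => f1z f2z.
have -> : z = ceval_at z (homog A n1 n2) / ceval_at z (homog B n1 n2).
  by rewrite -XBA rmorphM mulfK //= horner_evalE map_polyX hornerX.
have constz (a : R) : ceval_at z a%:P \is Num.real.
  by rewrite /= horner_evalE map_polyC hornerC real_complex_real.
by rewrite (homog2_ratio (psi := ceval_at z)) // rpred_div // !eval2_via_rpred.
Qed.

End Generators.

Theorem theorem3 (R : realType) (p1 q1 p2 q2 : {poly R}) :
  q1 != 0 -> coprimep p1 q1 -> ((1 < size p1) || (1 < size q1))%N ->
  q2 != 0 -> coprimep p2 q2 -> ((1 < size p2) || (1 < size q2))%N ->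
  generates_Rz (frac_of p1 q1) (frac_of p2 q2) ->
  exists A : seq (CP1 R), forall w : CP1 R,
    (in_Rhat (ratmap p1 q1 w) && in_Rhat (ratmap p2 q2 w))
    = (in_Rhat w || (w \in A)).
Proof.
move=> q1n0 _ _ q2n0 _ _ /(homog2_X_relation q1n0 q2n0).
move=> [A [B [n1 [n2 [degA degB Bn0 XBA]]]]].
pose P := q1 * q2 * homog2 B n1 n2 p1 q1 p2 q2.
apply: (@Rhat_up_to_roots _ _ (map_poly (real_complex R) P)).
- by rewrite map_poly_eq0 !mulf_neq0.
- case=> [z /[!in_RhatE] zreal | _]; last by rewrite !in_Rhat_ratmap_oo.
  by rewrite !in_Rhat_ratmap_real.
move=> z /andP[f1z f2z] Pzn0.
exact: real_of_homog2_relation degA degB XBA Pzn0 f1z f2z.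
Qed.
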